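(* There is an integer $N$ such that, for every $\nu\ge N$, there are only finitely many numerical semigroups $S$, with minimal generators $a_1<a_2<\cdots<a_\nu$, such that $a_2>\frac{c(S)+\mu(S)}{3}$, $\nu(S)=\nu$, $\mu(S)\le\frac49\nu^2$, and $S$ does not satisfy Wilf's conjecture (i.e. $\nu(S)|L(S)|<c(S)$).
   Context: A numerical semigroup is a submonoid $S\subseteq\mathbb{N}$ with finite complement. $\nu(S)$ is the number of minimal generators, $\mu(S)=a_1$ the multiplicity, $c(S)$ the conductor (least integer with $c(S)+\mathbb{N}\subseteq S$), and $L(S)=\{x\in S:0\le x<c(S)\}$. Wilf's conjecture for $S$ is the inequality $\nu(S)|L(S)|\ge c(S)$. *)

From mathcomp Require Import all_boot.
Set Implicit Arguments. Unset Strict Implicit. Unset Printing Implicit Defensive.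

Definition is_numerical_semigroup (S : pred nat) : Prop :=
  [/\ S 0,
      (forall x y, S x -> S y -> S (x + y)) &
      exists c, forall n, c <= n -> S n].

Definition is_min_gen (S : pred nat) (x : nat) : Prop :=
  [/\ S x, 0 < x &
      ~ (exists y z, [/\ 0 < y, 0 < z, S y, S z & y + z = x])].

(* a = [:: a_1; ...; a_nu] is the strictly increasing list of all the
   minimal generators of S. Then nu(S) = size a, mu(S) = a_1 = nth 0 a 0,
   and a_2 = nth 0 a 1. *)
Definition min_gens (S : pred nat) (a : seq nat) : Prop :=
  sorted ltn a /\ (forall x, is_min_gen S x <-> x \in a).

Definition is_conductor (S : pred nat) (c : nat) : Prop :=
  (forall n, c <= n -> S n) /\
  (forall c', (forall n, c' <= n -> S n) -> c <= c').

Definition card_L (S : pred nat) (c : nat) : nat := count S (iota 0 c).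

From Stdlib Require Import Classical.
From mathcomp Require Import all_boot zify.
Set Implicit Arguments. Unset Strict Implicit. Unset Printing Implicit Defensive.

(* Write mu = a_1 and G = [a_2; ...; a_nu]. The progressions w, w + mu, ...
   below c, for w in 0 :: G, are disjoint subsets of L(S), whence
   mu |L(S)| >= c + sum_(x in G) (c - x). Since a_2 > (c + mu) / 3, the element
   of S in [c, c + mu) of a given residue is j mu + (at most two elements of G),
   so every residue mod mu comes from 0 :: G or from a pair x <= y in G with
   x + y < c + mu: there are at least mu - nu such pairs. Each pair (x, y)
   contributes (c - x) + (c - y) > c - mu to nu sum_(x in G) (c - x), counted
   through the degrees of the graph of pairs; when c >= 3 mu^2 this yields
   Wilf's inequality, unless that graph is complete with all loops, which would
   force mu = nu (nu + 1) / 2 > 4 nu^2 / 9. Hence a counterexample has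
   c < 3 mu^2 <= 3 nu^4, and S is determined by its trace on [0, 3 nu^4). *)

Lemma nsg_mul S k x : is_numerical_semigroup S -> S x -> S (k * x).
Proof.
case=> S0 SD _ Sx; elim: k => [|k IHk]; first by rewrite mul0n.
by rewrite mulSn; apply: SD.
Qed.

Lemma min_gens_mem S a x : min_gens S a -> x \in a -> is_min_gen S x.
Proof. by case=> _ /(_ x) []. Qed.

Lemma nsg_min_gens_decomp S m G s :
  is_numerical_semigroup S -> min_gens S (m :: G) -> S s ->
  exists j l, all (mem G) l /\ s = j * m + sumn l.
Proof.
move=> NS [_ gensP]; elim: s {-2}s (leqnn s) => [|n IHn] s le_sn Ss.
  by exists 0, [::]; split => //=; lia.
have [->|s_gt0] := posnP s; first by exists 0, [::].
case: (classic (is_min_gen S s)) => [/gensP|not_gen].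
  rewrite inE => /predU1P[->|sG]; first by exists 1, [::]; rewrite mul1n addn0.
  by exists 0, [:: s]; rewrite /= sG /= addn0.
have [y [z [y_gt0 z_gt0 Sy Sz def_s]]] :
    exists y z, [/\ 0 < y, 0 < z, S y, S z & y + z = s].
  by apply: NNPP => no_split; apply: not_gen.
have [j1 [l1 [l1G def_y]]] := IHn y ltac:(lia) Sy.
have [j2 [l2 [l2G def_z]]] := IHn z ltac:(lia) Sz.
exists (j1 + j2), (l1 ++ l2); rewrite all_cat l1G l2G sumn_cat; split => //.
lia.
Qed.

(* Two minimal generators congruent modulo a positive x \in S would differ
   by a positive multiple of x, making the larger one decomposable. *)
Lemma min_gens_mod_uniq S a x : is_numerical_semigroup S -> min_gens S a ->
  S x -> 0 < x -> uniq [seq y %% x | y <- a].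
Proof.
move=> NS gensS Sx x_gt0; have a_uniq := sorted_uniq ltn_trans ltnn gensS.1.
have lt_mod y z : y \in a -> z \in a -> y < z -> y %% x != z %% x.
  move=> ya za lt_yz; apply/negP => /eqP eq_mod.
  have [Sy y_gt0 _] := min_gens_mem gensS ya.
  have [_ _ []] := min_gens_mem gensS za.
  exists y, (z - y); split => //; try lia.
  have /divnK <- : x %| z - y by rewrite -eqn_mod_dvd ?eq_mod // ltnW.
  exact: nsg_mul.
rewrite map_inj_in_uniq // => y z ya za eq_mod.
case: (ltngtP y z) => // [lt_yz|lt_zy].
  by move: (lt_mod y z ya za lt_yz); rewrite eq_mod eqxx.
by move: (lt_mod z y za ya lt_zy); rewrite eq_mod eqxx.
Qed.

Lemma sorted_ltn_nth1_le m G x : sorted ltn (m :: G) -> x \in G ->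
  nth 0 (m :: G) 1 <= x.
Proof.
case: G => [//|y G] /= /andP[_ pG]; rewrite inE => /predU1P[->//|xG].
by apply: ltnW; move/allP: (order_path_min ltn_trans pG); apply.
Qed.

Definition progression_below m c w :=
  [seq w + j * m | j <- iota 0 ((c - w + m.-1) %/ m)].

Lemma size_progression_below m c w : 0 < m ->
  c - w <= m * size (progression_below m c w).
Proof.
move=> m_gt0; rewrite size_map size_iota.
have := divn_eq (c - w + m.-1) m; have := ltn_pmod (c - w + m.-1) m_gt0; lia.
Qed.

Lemma mem_progression_below m c w x : 0 < m ->
  x \in progression_below m c w -> x < c /\ exists j, x = w + j * m.
Proof.
move=> m_gt0 /mapP[j]; rewrite mem_iota add0n => /andP[_ lt_j] ->.
split; last by exists j.
have := divn_eq (c - w + m.-1) m.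
have : j.+1 * m <= (c - w + m.-1) %/ m * m by rewrite leq_mul2r lt_j orbT.
lia.
Qed.

Lemma progression_below_mod m c w x : 0 < m ->
  x \in progression_below m c w -> x %% m = w %% m.
Proof.
by move=> m_gt0 /(mem_progression_below m_gt0)[_ [j ->]]; rewrite addnC modnMDl.
Qed.

(* Each w of W contributes the elements w, w + m, ... below c of L(S); they
   are disjoint as the w have distinct residues mod m. *)
Lemma card_L_ge_sum S m c W : is_numerical_semigroup S -> S m -> 0 < m ->
  all S W -> uniq [seq w %% m | w <- W] ->
  \sum_(w <- W) (c - w) <= m * card_L S c.
Proof.
move=> NS Sm m_gt0 SW uniqW.
pose Ls := flatten [seq progression_below m c w | w <- W].
have LsS : {subset Ls <= [seq x <- iota 0 c | S x]}.
  move=> x /flatten_mapP[w wW xw].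
  have [lt_xc [j def_x]] := mem_progression_below m_gt0 xw.
  rewrite mem_filter mem_iota leq0n lt_xc !andbT def_x; have [_ SD _] := NS.
  by apply: SD; [exact: (allP SW) | exact: nsg_mul].
have uniqLs : uniq Ls.
  elim: W uniqW {SW LsS} @Ls => //= w W IHW /andP[wW uniqW].
  rewrite cat_uniq IHW // andbT; apply/andP; split.
    rewrite map_inj_uniq ?iota_uniq // => i j /eqP.
    by rewrite eqn_add2l eqn_mul2r eqn0Ngt m_gt0 => /eqP.
  apply/hasP => -[x /flatten_mapP[v vW xv] xw]; move: wW.
  rewrite -(progression_below_mod m_gt0 xw) (progression_below_mod m_gt0 xv).
  by rewrite (map_f (fun y => y %% m) vW).
apply: leq_trans (_ : m * size Ls <= _); last first.
  by rewrite leq_mul2l /card_L -size_filter uniq_leq_size ?orbT.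
rewrite size_flatten /shape -map_comp sumnE big_map big_distrr leq_sum //= => w _.
exact: size_progression_below.
Qed.

Definition small_pairs (G : seq nat) B :=
  [seq p <- [seq (x, y) | x <- G, y <- G] | (p.1 <= p.2) && (p.1 + p.2 < B)].

(* Degree of x in the graph on G whose edges are the small pairs; a loop
   (x, x) is counted twice. *)
Definition pair_deg (G : seq nat) B x :=
  count (fun y => (x <= y) && (x + y < B)) G +
  count (fun y => (y <= x) && (y + x < B)) G.

Lemma sum_small_pairs (G : seq nat) B (t : nat -> nat) :
  \sum_(p <- small_pairs G B) (t p.1 + t p.2) = \sum_(x <- G) t x * pair_deg G B x.
Proof.
rewrite big_filter big_mkcond big_allpairs /=.
pose small x y := (x <= y) && (x + y < B).
transitivity (\sum_(x <- G) \sum_(y <- G)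
  ((if small x y then t x else 0) + (if small x y then t y else 0))).
  by apply: eq_bigr => x _; apply: eq_bigr => y _; rewrite /small; case: ifP.
rewrite (eq_bigr _ (fun x _ => big_split _ _ _ _ _)) big_split /=.
rewrite [X in _ + X]exchange_big -big_split /=.
apply: eq_bigr => x _; rewrite mulnDr -!big_mkcond /=.
by rewrite -!sum1_count !big_distrr /= !muln1.
Qed.

Lemma count_pair_deg_overlap (G : seq nat) B x : uniq G ->
  count (predI (fun y => (x <= y) && (x + y < B))
               (fun y => (y <= x) && (y + x < B))) G <= 1.
Proof.
move=> uniqG; apply: leq_trans (_ : count_mem x G <= 1).
  by apply: sub_count => y /= /andP[/andP[le_xy _] /andP[le_yx _]]; apply/eqP; lia.
by rewrite count_uniq_mem //; case: (x \in G).
Qed.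

Lemma pair_deg_le (G : seq nat) B x : uniq G -> pair_deg G B x <= (size G).+1.
Proof.
move=> uniqG; rewrite /pair_deg -count_predUI -addn1 leq_add ?count_size //.
exact: count_pair_deg_overlap.
Qed.

Lemma pair_deg_full (G : seq nat) B x : uniq G -> pair_deg G B x = (size G).+1 ->
  {in G, forall y, x + y < B}.
Proof.
move=> uniqG; rewrite /pair_deg -count_predUI => deg_x.
have /allP all_small : all (predU (fun y => (x <= y) && (x + y < B))
                                  (fun y => (y <= x) && (y + x < B))) G.
  rewrite all_count eqn_leq count_size /=.
  by have := count_pair_deg_overlap B x uniqG; lia.
by move=> y /all_small /orP[/andP[_ //] | /andP[_]]; rewrite addnC.
Qed.

Lemma pair_deg_gt0 (G : seq nat) B x : (0 < pair_deg G B x) = has (fun y => x + y < B) G.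
Proof.
rewrite /pair_deg addn_gt0 -!has_count; apply/orP/hasP => [|[y yG small_xy]].
  case=> /hasP[y yG /andP[_ small_y]]; exists y => //.
  by rewrite addnC.
case: (leqP x y) => [le_xy | /ltnW le_yx].
  by left; apply/hasP; exists y; rewrite // le_xy small_xy.
by right; apply/hasP; exists y; rewrite // le_yx addnC small_xy.
Qed.

Lemma weighted_pair_deg_split (G : seq nat) B (t : nat -> nat) : uniq G ->
  (size G).+1 * \sum_(x <- G) t x =
  \sum_(p <- small_pairs G B) (t p.1 + t p.2) +
  \sum_(x <- G) t x * ((size G).+1 - pair_deg G B x).
Proof.
move=> uniqG; rewrite sum_small_pairs big_distrr -big_split /=.
apply: eq_big_seq => x _; rewrite -mulnDr mulnC subnKC //.
exact: pair_deg_le.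
Qed.

(* A vertex of positive degree then has full degree, hence is adjacent to
   every vertex: the graph is complete with all loops. *)
Lemma small_pairs_regular (G : seq nat) B : uniq G -> small_pairs G B != [::] ->
  ~~ has (fun x => 0 < pair_deg G B x < (size G).+1) G ->
  2 * size (small_pairs G B) = size G * (size G).+1.
Proof.
move=> uniqG nonempty /hasPn extreme.
have deg_full z : z \in G -> 0 < pair_deg G B z -> pair_deg G B z = (size G).+1.
  move=> zG deg_z; apply/eqP; rewrite eqn_leq pair_deg_le //=.
  by move: (extreme z zG); rewrite deg_z /= -leqNgt.
have [[x y] pP] : exists p, p \in small_pairs G B.
  by case: (small_pairs G B) nonempty => // p ? _; exists p; rewrite mem_head.
move: pP; rewrite mem_filter => /andP[/= /andP[_ small_xy]].
case/allpairsP=> -[x' y'] [/= xG yG [ex ey]]; subst x' y'.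
have full_x : {in G, forall z, x + z < B}.
  apply: (pair_deg_full uniqG (deg_full x xG _)).
  by rewrite pair_deg_gt0; apply/hasP; exists y.
have all_full z : z \in G -> pair_deg G B z = (size G).+1.
  move=> zG; apply: deg_full => //; rewrite pair_deg_gt0; apply/hasP.
  by exists x; rewrite // addnC full_x.
have two_pairs : \sum_(p <- small_pairs G B) (1 + 1) = \sum_(z <- G) (size G).+1.
  rewrite (sum_small_pairs G B (fun _ => 1)).
  by apply: eq_big_seq => z zG; rewrite mul1n all_full.
by move: two_pairs; rewrite !big_const_seq !count_predT !iter_addn_0 [size G * _]mulnC.
Qed.

Lemma exists_mod_window c m r : r < m -> exists s, [/\ c <= s, s < c + m & s %% m = r].
Proof.
move=> lt_rm; have m_gt0 : 0 < m by lia.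
have def_c := divn_eq c m; have := ltn_pmod c m_gt0.
case: (leqP (c %% m) r) => [le_cr | lt_rc] lt_cm.
  by exists (c %/ m * m + r); rewrite modnMDl modn_small //; split; lia.
by exists (c %/ m * m + m + r); rewrite -mulSnr modnMDl modn_small //; split; lia.
Qed.

Section LargeConductor.

Variables (S : pred nat) (m c : nat) (G : seq nat).
Hypothesis S_nsg : is_numerical_semigroup S.
Hypothesis S_gens : min_gens S (m :: G).
Hypothesis S_cond : forall n, c <= n -> S n.
Hypothesis a2_large : c + m < 3 * nth 0 (m :: G) 1.

Local Notation nu := (size G).+1.
Local Notation P := (small_pairs G (c + m)).

Lemma mu_gt0 : 0 < m.
Proof. by case: (min_gens_mem S_gens (mem_head m G)). Qed.

Lemma S_mu : S m.
Proof. by case: (min_gens_mem S_gens (mem_head m G)). Qed.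

Lemma uniq_gens_tail : uniq G.
Proof. by have /andP[] := sorted_uniq ltn_trans ltnn S_gens.1. Qed.

Lemma gens_tail_large x : x \in G -> c + m < 3 * x.
Proof.
move=> xG; apply: leq_trans a2_large _.
by rewrite leq_mul2l (sorted_ltn_nth1_le S_gens.1 xG) orbT.
Qed.

Lemma card_L_ge_gens : c + \sum_(x <- G) (c - x) <= m * card_L S c.
Proof.
have := @card_L_ge_sum S m c (0 :: G) S_nsg S_mu mu_gt0.
rewrite big_cons subn0; apply.
  have [S0 _ _] := S_nsg; rewrite /= S0; apply/allP => x xG.
  by case: (min_gens_mem S_gens (mem_behead (s := m :: G) xG)).
by have := min_gens_mod_uniq S_nsg S_gens S_mu mu_gt0; rewrite /= mod0n modnn.
Qed.

(* The element of S in [c, c + m) with residue r is j m plus at most two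
   elements of G, as these exceed (c + m) / 3. *)
Lemma residue_small_pair r : r < m -> r \notin [seq x %% m | x <- 0 :: G] ->
  exists2 p, p \in P & (p.1 + p.2) %% m = r.
Proof.
move=> lt_rm new_r; have [s [le_cs lt_s s_r]] := exists_mod_window c lt_rm.
have [j [l [lG def_s]]] := nsg_min_gens_decomp S_nsg S_gens (S_cond le_cs).
have mod_l : sumn l %% m = r by rewrite -s_r def_s modnMDl.
case: l lG {def_s} mod_l (def_s) => [|x [|y [|z l]]] /=.
- by move=> _ mod_l; move: new_r; rewrite -mod_l /= inE eqxx.
- case/andP=> xG _; rewrite addn0 => mod_l.
  by move: new_r; rewrite -mod_l /= inE (map_f (fun y => y %% m) xG) orbT.
- case/and3P=> xG yG _; rewrite addn0 => mod_l def_s.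
  have [le_xy | lt_yx] := leqP x y; [exists (x, y) | exists (y, x)];
    rewrite //= ?[y + x]addnC // mem_filter /= ?allpairs_f //; apply/andP; lia.
- case/and4P=> xG yG zG _.
  have := gens_tail_large xG; have := gens_tail_large yG; have := gens_tail_large zG.
  lia.
Qed.

Lemma mu_le_nu_add_pairs : m <= nu + size P.
Proof.
pose R := [seq x %% m | x <- 0 :: G] ++ [seq (p.1 + p.2) %% m | p <- P].
have -> : nu + size P = size R by rewrite size_cat !size_map.
rewrite -[m in m <= _](size_iota 0) uniq_leq_size ?iota_uniq // => r.
rewrite mem_iota add0n => /andP[_ lt_rm]; rewrite mem_cat.
case: (boolP (r \in _)) => //= new_r.
by have [p pP <-] := residue_small_pair lt_rm new_r; apply/mapP; exists p.
Qed.

Lemma small_pair_weight : m <= c ->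
  size P * (c - m + 1) <= \sum_(p <- P) ((c - p.1) + (c - p.2)).
Proof.
move=> le_mc.
rewrite -[size P]count_predT -sum1_count big_distrl /= big_seq [leqRHS]big_seq.
by apply: leq_sum => p; rewrite mem_filter => /andP[/andP[_ small_p] _]; lia.
Qed.

Lemma pair_deg_gt0_large x : 0 < pair_deg G (c + m) x -> c <= 3 * (c - x) + 2 * m.
Proof.
by rewrite pair_deg_gt0 => /hasP[y /gens_tail_large y_large small_xy]; lia.
Qed.

Lemma wilf_of_large_conductor : 9 * m <= 4 * nu ^ 2 -> 3 * m ^ 2 <= c ->
  c <= nu * card_L S c.
Proof.
move=> mu_small cond_large.
set T := \sum_(x <- G) (c - x); set k := m - nu.
have le_mc : m <= c by nia.
have le_km : k <= m by lia.
suff le_kc : k * c <= nu * T.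
  rewrite -(leq_pmul2l mu_gt0) mulnCA.
  apply: leq_trans (leq_mul (leqnn nu) card_L_ge_gens).
  apply: leq_trans (_ : (nu + k) * c <= _); first by rewrite leq_mul2r; lia.
  by rewrite mulnDl mulnDr leq_add2l.
have split_T := weighted_pair_deg_split (c + m) (fun x => c - x) uniq_gens_tail.
rewrite -/T /= in split_T; have weight_P := small_pair_weight le_mc.
have le_kP : k <= size P by have := mu_le_nu_add_pairs; lia.
have [lt_kP | le_Pk] := ltnP k (size P).
  have : k.+1 * (c - m + 1) <= nu * T.
    rewrite split_T; apply: leq_trans (leq_mul lt_kP (leqnn _)) _.
    exact: leq_trans weight_P (leq_addr _ _).
  (* k (m - 1) <= m^2 - m <= c - m + 1 *)
  nia.
have [-> | k_gt0] := posnP k; first by rewrite mul0n.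
have P_nonempty : P != [::] by apply/eqP => P0; move: le_kP; rewrite P0 /=; lia.
pose mid_deg x := 0 < pair_deg G (c + m) x < nu.
have [/hasP[x0 x0G /andP[deg_gt0 deg_lt]] | regular] := boolP (has mid_deg G).
  have x0_large := pair_deg_gt0_large deg_gt0.
  have : c - x0 <= \sum_(x <- G) (c - x) * (nu - pair_deg G (c + m) x).
    rewrite (bigD1_seq x0) //= ?uniq_gens_tail //; apply: leq_trans (leq_addr _ _).
    by rewrite leq_pmulr // subn_gt0.
  (* 3 (c - x0) >= c - 2 m >= 3 m (m - 1) >= 3 k (m - 1) *)
  nia.
(* Here m = nu + size P = nu (nu + 1) / 2, contradicting 9 m <= 4 nu^2. *)
have := small_pairs_regular uniq_gens_tail P_nonempty regular.
nia.
Qed.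

End LargeConductor.

Lemma eventually_true_preds_finite K : exists Ls : seq (pred nat),
  forall P : pred nat, (forall n, K <= n -> P n) ->
  exists2 i, i < size Ls & P =1 nth (fun _ => false) Ls i.
Proof.
pose of_tuple (t : K.-tuple bool) : pred nat := fun n => (K <= n) || nth false t n.
exists [seq of_tuple t | t <- enum {: K.-tuple bool}] => P P_from_K.
pose t := @Tuple K bool (mkseq P K) (introT eqP (size_mkseq P K)).
have t_enum : t \in enum {: K.-tuple bool} by rewrite mem_enum.
exists (index t (enum {: K.-tuple bool})); first by rewrite size_map index_mem.
move=> n; rewrite (nth_map t) ?index_mem // nth_index // /of_tuple /=.
by case: (leqP K n) => [/P_from_K | lt_nK] //=; rewrite nth_mkseq.
Qed.

Theorem proposition4p8 :
  exists N : nat, forall nu : nat, N <= nu ->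
    exists Ls : seq (pred nat),
      forall (S : pred nat) (a : seq nat) (c : nat),
        is_numerical_semigroup S ->
        min_gens S a ->
        size a = nu ->
        is_conductor S c ->
        c + nth 0 a 0 < 3 * nth 0 a 1 ->
        9 * nth 0 a 0 <= 4 * nu ^ 2 ->
        nu * card_L S c < c ->
        exists2 i, i < size Ls & S =1 nth (fun _ => false) Ls i.
Proof.
exists 0 => nu _; have [Ls LsP] := eventually_true_preds_finite (3 * nu ^ 4).
exists Ls => S [|m G] c S_nsg S_gens size_a [S_cond _] a2_large mu_small not_wilf;
  subst nu.
  by move: a2_large; rewrite /= muln0.
have lt_c_m2 : c < 3 * m ^ 2.
  rewrite ltnNge; apply: contraL not_wilf => cond_large.
  by rewrite -leqNgt (wilf_of_large_conductor S_nsg S_gens S_cond).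
have le_m2 : m ^ 2 <= (size G).+1 ^ 4.
  by rewrite (_ : 4 = 2 * 2) // expnM leq_exp2r //; move: mu_small => /=; lia.
apply: LsP => n le_Kn; apply: S_cond; apply: leq_trans (ltnW lt_c_m2) (leq_trans _ le_Kn).
by rewrite leq_mul2l le_m2 orbT.
Qed.
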